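(* Let $X$ and $Y$ be complex Banach spaces and $\mathcal{A}=L(Y)$ the algebra of bounded linear operators on $Y$. Let $\mathcal{F}=\{F_t\}_{t\ge0}$ be a semigroup of holomorphic self-mappings of a domain $\mathcal{D}\subset X$, and let $\{\Gamma_t\}_{t\ge0}$ be a family of holomorphic maps $\mathcal{D}\to\mathcal{A}$. Then $\{\Gamma_t\}_{t\ge0}$ is a semicocycle over $\mathcal{F}$ if and only if the family $\widetilde{\mathcal F}=\{\widetilde F_t\}_{t\ge0}$, $\widetilde F_t(x,y)=(F_t(x),\Gamma_t(x)y)$, is a semigroup on the domain $\mathcal{D}\times Y$. If, in addition, there are a biholomorphic map $h$ of $\mathcal{D}$ onto $h(\mathcal{D})\subset X$ and a bounded linear operator $A$ on $X$ with $F_t(x)=h^{-1}(e^{tA}h(x))$ for all $t\ge0$, $x\in\mathcal{D}$, and there are a holomorphic $M:\mathcal{D}\to\mathcal{A}_*$ and $B_0\in\mathcal{A}$ with $\Gamma_t(x)=M(F_t(x))^{-1}e^{tB_0}M(x)$ for all $t,x$, then $\widetilde{\mathcal F}$ is linearized by $\widetilde h(x,y)=(h(x),M(x)y)$, i.e. $\widetilde F_t(x,y)=\widetilde h^{-1}\big(e^{tA}h(x),\,e^{tB_0}M(x)y\big)$ for all $t\ge0$, $(x,y)\in\mathcal{D}\times Y$.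
   Context: $\mathcal{A}_*$ denotes the invertible elements of $\mathcal{A}$. A semigroup on a domain $\Omega$ is a family $\{G_t\}_{t\ge0}$ of holomorphic self-maps of $\Omega$ with $G_{t+s}=G_t\circ G_s$ for $t,s\ge0$ and $G_t(w)\to w$ as $t\to0^+$ for each $w\in\Omega$. A semicocycle over $\mathcal{F}$ is a family $\{\Gamma_t\}_{t\ge0}$ of holomorphic maps $\mathcal{D}\to\mathcal{A}$ with $\Gamma_t(F_s(x))\Gamma_s(x)=\Gamma_{t+s}(x)$ for all $t,s\ge0$, $x\in\mathcal{D}$, and $\Gamma_t(x)\to\mathrm{Id}_Y$ as $t\to0^+$ for each $x$. *)

From HB Require Import structures.
From mathcomp Require Import all_boot all_order all_algebra.
From mathcomp Require Import all_classical all_reals all_analysis.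
From mathcomp Require Export complex.
Import Order.TTheory GRing.Theory Num.Theory.
Import numFieldNormedType.Exports.
Local Open Scope ring_scope.
Local Open Scope classical_set_scope.

Set Implicit Arguments.
Unset Strict Implicit.
Unset Printing Implicit Defensive.

Section Defs.
Context {R : realType}.

Definition holo {V W : normedModType R[i]} (D : set V) (f : V -> W) : Prop :=
  forall x, D x -> differentiable f x.

Definition domain {V : normedModType R[i]} (D : set V) : Prop :=
  open D /\ connected D /\ D !=set0.

Definition is_semigroup {V : normedModType R[i]} (Om : set V)
    (G : R -> V -> V) : Prop :=
  (forall t, 0 <= t -> holo Om (G t) /\ (forall w, Om w -> Om (G t w))) /\
  (forall t s, 0 <= t -> 0 <= s -> forall w, Om w -> G (t + s) w = G t (G s w)) /\
  (forall w, Om w -> G t w @[t --> 0^'+] --> w).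

Definition bounded_op {Y : normedModType R[i]} (T : Y -> Y) : Prop :=
  (forall (a : R[i]) (u v : Y), T (a *: u + v) = a *: T u + T v) /\
  (exists C : R[i], forall y, `|T y| <= C * `|y|).

(* G : D -> L(Y) (operators represented as functions Y -> Y) is holomorphic:
   G x is in L(Y) for x in D and G is Frechet differentiable in operator norm,
   with a derivative L in L(X, L(Y)).  The operator-norm estimate
   ||G(x0+h) - G(x0) - L h||_op <= e ||h|| is written out pointwise in y. *)
Definition holo_op {X Y : normedModType R[i]} (D : set X) (G : X -> Y -> Y)
  : Prop :=
  forall x0, D x0 ->
    bounded_op (G x0) /\
    exists L : X -> Y -> Y,
      (forall h, bounded_op (L h)) /\
      (forall (a : R[i]) (h k : X) (y : Y), L (a *: h + k) y = a *: L h y + L k y) /\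
      (exists C : R[i], forall h y, `|L h y| <= C * `|h| * `|y|) /\
      (forall e : R[i], 0 < e -> exists2 d : R[i], 0 < d &
         forall h, `|h| < d -> forall y,
           `|G (x0 + h) y - G x0 y - L h y| <= e * `|h| * `|y|).

(* semicocycle over F (Gamma_t(x) -> Id in the strong operator topology) *)
Definition semicocycle {X Y : normedModType R[i]} (D : set X)
    (F : R -> X -> X) (Gam : R -> X -> Y -> Y) : Prop :=
  (forall t, 0 <= t -> holo_op D (Gam t)) /\
  (forall t s, 0 <= t -> 0 <= s -> forall x, D x -> forall y,
      Gam t (F s x) (Gam s x y) = Gam (t + s) x y) /\
  (forall x, D x -> forall y, Gam t x y @[t --> 0^'+] --> y).

Definition tildeF {X Y : normedModType R[i]} (F : R -> X -> X)
    (Gam : R -> X -> Y -> Y) (t : R) (p : X * Y) : X * Y :=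
  (F t p.1, Gam t p.1 p.2).

Definition expop {V : normedModType R[i]} (A : V -> V) (t : R) (v : V) : V :=
  limn (series (fun k : nat => ((t ^+ k / (k`!)%:R)%:C)%C *: iter k A v)).

Definition biholo {X : normedModType R[i]} (D : set X) (h hinv : X -> X) : Prop :=
  open (h @` D) /\ holo D h /\ holo (h @` D) hinv /\
  (forall x, D x -> hinv (h x) = x) /\
  (forall u, (h @` D) u -> h (hinv u) = u).

(* inverse of tilde h (x, y) = (h x, M(x) y) *)
Definition tilde_hinv {X Y : normedModType R[i]} (hinv : X -> X)
    (Minv : X -> Y -> Y) (p : X * Y) : X * Y :=
  (hinv p.1, Minv (hinv p.1) p.2).

End Defs.

From HB Require Import structures.
From mathcomp Require Import all_boot all_order all_algebra.
From mathcomp Require Import all_classical all_reals all_analysis.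
From mathcomp Require Import complex.
Import Order.TTheory GRing.Theory Num.Theory.
Import numFieldNormedType.Exports.
Local Open Scope ring_scope.
Local Open Scope classical_set_scope.

Set Implicit Arguments.
Unset Strict Implicit.
Unset Printing Implicit Defensive.

(** The second component of the semigroup law for [tildeF] is exactly the
  cocycle identity, and continuity at [t = 0] splits componentwise, so the
  only analytic point is that [tildeF] is holomorphic when every [Gam t] is,
  i.e. that [(x, y) |-> Gam t x y] is jointly differentiable. Its derivative
  at [(x0, y0)] is [(h, k) |-> L h y0 + Gam t x0 k], with [L] the derivative
  of [Gam t] at [x0]; the remainder splits as the operator-norm remainder of
  [Gam t] applied to [y0 + k], of size [o(|h|)], plus the quadratic term
  [L h k]. The linearization is a direct substitution. *)

Section ProductNorm.
Variables (K : numDomainType) (U V : normedModType K).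

Lemma norm_fst_le (p : U * V) : `|p.1| <= `|p|.
Proof. by rewrite prod_normE comparable_le_max ?real_comparable ?normr_real ?lexx. Qed.

Lemma norm_snd_le (p : U * V) : `|p.2| <= `|p|.
Proof. by rewrite prod_normE comparable_le_max ?real_comparable ?normr_real ?lexx ?orbT. Qed.

End ProductNorm.

Lemma ler_pM_norml (K : numDomainType) (a b C : K) :
  0 <= a -> 0 <= b -> a <= C * b -> a <= `|C| * b.
Proof.
move=> a0 b0 aCb; have /ger0_norm Cb : 0 <= C * b by apply: le_trans aCb.
by rewrite -(ger0_norm b0) -normrM Cb.
Qed.

Section BoundedOperators.
Variables (R : realType) (Y : normedModType R[i]).

Lemma bounded_opD (T : Y -> Y) : bounded_op T -> {morph T : u v / u + v}.
Proof. by case=> linT _ u v; have := linT 1 u v; rewrite !scale1r. Qed.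

Lemma bounded_op_norm_le (T : Y -> Y) :
  bounded_op T -> exists2 C : R[i], 0 <= C & forall y, `|T y| <= C * `|y|.
Proof. by case=> _ [C bT]; exists `|C| => // y; apply: ler_pM_norml. Qed.

End BoundedOperators.

Lemma differentiable_linear_approx (K : numFieldType) (V W : normedModType K)
    (f : V -> W) (x : V) (df : V -> W) (C : K) :
  (forall a u v, df (a *: u + v) = a *: df u + df v) ->
  0 <= C -> (forall v, `|df v| <= C * `|v|) ->
  (forall e, 0 < e -> \forall h \near 0, `|f (x + h) - f x - df h| <= e * `|h|) ->
  differentiable f x.
Proof.
move=> lin C0 bd approx.
pose dfL : {linear V -> W} := HB.pack df (GRing.isLinear.Build K V W *:%R df lin).
have cont : continuous dfL.
  apply: bounded_linear_continuous; apply/linear_boundedP.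
  near=> r => v; apply: le_trans (bd v) _; apply: ler_wpM2r => //.
  by near: r; apply: nbhs_pinfty_ge; exact: ger0_real.
have expand : f \o shift x = cst (f x) + dfL +o_ 0 id.
  apply/eqaddoP => e e0; apply: filterS (approx e e0) => h /=.
  by rewrite !fctE [h + x]addrC opprD addrA.
by apply/diff_locallyP; rewrite (diff_unique cont expand).
Unshelve. all: by end_near. Qed.

Lemma differentiable_fst (K : numFieldType) (U V : normedModType K) (p : U * V) :
  differentiable (@fst U V) p.
Proof.
apply: (@differentiable_linear_approx _ _ _ _ _ fst 1) => // [v|e e0].
  by rewrite mul1r norm_fst_le.
apply: filterE => h /=.
by rewrite addrAC addrK subrr normr0 mulr_ge0 // ltW.
Qed.

Section JointDifferentiability.
Variables (R : realType) (X Y : normedModType R[i]) (G : X -> Y -> Y).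

Lemma joint_remainder_small (x0 : X) (y0 : Y) (L : X -> Y -> Y) (CL : R[i]) :
  {morph G x0 : u v / u + v} -> (forall h, {morph L h : u v / u + v}) ->
  0 <= CL -> (forall h y, `|L h y| <= CL * `|h| * `|y|) ->
  (forall e : R[i], 0 < e -> exists2 d : R[i], 0 < d & forall h, `|h| < d ->
     forall y, `|G (x0 + h) y - G x0 y - L h y| <= e * `|h| * `|y|) ->
  forall e : R[i], 0 < e -> \forall p \near (0 : X * Y),
    `|G (x0 + p.1) (y0 + p.2) - G x0 y0 - (L p.1 y0 + G x0 p.2)| <= e * `|p|.
Proof.
move=> addG addL CL0 bL approx e e0.
have y0S_gt0 : 0 < `|y0| + 1 by rewrite ltr_wpDl.
have CLS_gt0 : 0 < CL + 1 by rewrite ltr_wpDl.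
have e'0 : 0 < e / 2 / (`|y0| + 1) by rewrite !divr_gt0.
have [d d0 approxd] := approx _ e'0.
near=> p; set h := p.1; set k := p.2.
have hp : `|h| <= `|p| := norm_fst_le p.
have kp : `|k| <= `|p| := norm_snd_le p.
have p_small : `|p| < d /\ `|p| < 1 /\ `|p| < e / 2 / (CL + 1).
  by split; [|split]; near: p; apply: (@nbhs0_lt _ (X * Y)%type); rewrite ?divr_gt0.
case: p_small => pd [p1 pe].
have -> : G (x0 + h) (y0 + k) - G x0 y0 - (L h y0 + G x0 k) =
    (G (x0 + h) (y0 + k) - G x0 (y0 + k) - L h (y0 + k)) + L h k.
  rewrite addG addL [in RHS](opprD (L h y0)) addrA subrK !opprD !addrA.
  exact: addrAC.
apply: le_trans (ler_normD _ _) _; rewrite [X in _ <= X * _]splitr mulrDl.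
apply: lerD.
  apply: le_trans (approxd h (le_lt_trans hp pd) (y0 + k)) _.
  apply: (@le_trans _ _ (e / 2 / (`|y0| + 1) * `|p| * (`|y0| + 1))).
    have e'_ge0 : 0 <= e / 2 / (`|y0| + 1) := ltW e'0.
    apply: ler_pM; rewrite ?mulr_ge0 ?ler_wpM2l ?(ltW e0) //.
    apply: le_trans (ler_normD _ _) _; apply: lerD => //.
    exact: ltW (le_lt_trans kp p1).
  by rewrite mulrAC divfK // gt_eqF.
apply: le_trans (bL h k) _.
apply: (@le_trans _ _ ((CL + 1) * `|p| * `|p|)).
  by apply: ler_pM; rewrite ?mulr_ge0 //; apply: ler_pM; rewrite ?lerDl.
by apply: ler_wpM2r => //; rewrite -ler_pdivlMl // mulrC ltW.
Unshelve. all: by end_near. Qed.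

Lemma holo_op_differentiable (D : set X) (x0 : X) (y0 : Y) :
  holo_op D G -> D x0 -> differentiable (fun p : X * Y => G p.1 p.2) (x0, y0).
Proof.
move=> holoG Dx0; have [opG [L [opL [linL [[CL bL] approx]]]]] := holoG x0 Dx0.
have [CG CG0 bG] := bounded_op_norm_le opG.
have bL' h y : `|L h y| <= `|CL| * `|h| * `|y|.
  by rewrite -mulrA ler_pM_norml ?mulr_ge0 // mulrA.
apply: (@differentiable_linear_approx _ _ _ _ _ (fun p => L p.1 y0 + G x0 p.2)
  (`|CL| * `|y0| + CG)).
- by move=> a u v /=; rewrite linL opG.1 scalerDr addrACA.
- by rewrite addr_ge0 ?mulr_ge0.
- move=> v; apply: le_trans (ler_normD _ _) _; rewrite mulrDl; apply: lerD.
    by apply: le_trans (bL' _ _) _; rewrite mulrAC ler_wpM2l ?mulr_ge0 ?norm_fst_le.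
  by apply: le_trans (bG _) _; rewrite ler_wpM2l ?norm_snd_le.
- exact: joint_remainder_small (bounded_opD opG) (fun h => bounded_opD (opL h))
    (normr_ge0 CL) bL' approx.
Qed.

End JointDifferentiability.

Section ExtendedSemigroup.
Variables (R : realType) (X Y : normedModType R[i]) (D : set X).
Variables (F : R -> X -> X) (Gam : R -> X -> Y -> Y).

Lemma holo_tildeF (t : R) :
  holo D (F t) -> holo_op D (Gam t) -> holo (D `*` setT) (tildeF F Gam t).
Proof.
move=> holoF holoG [x y] [/= Dx _]; apply: differentiable_pair.
  exact: differentiable_comp (differentiable_fst (x, y)) (holoF x Dx).
exact: holo_op_differentiable holoG Dx.
Qed.

Lemma semicocycle_tildeF_semigroup :
  is_semigroup D F -> semicocycle D F Gam ->
  is_semigroup (D `*` setT) (tildeF F Gam).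
Proof.
move=> [selfF [lawF cvgF]] [holoG [cocycle cvgG]]; split; [|split].
- move=> t t0; have [holoF mapsD] := selfF t t0; split.
    exact: holo_tildeF (holoG t t0).
  by move=> [x y] [/= Dx _]; split => //=; apply: mapsD.
- by move=> t s t0 s0 [x y] [/= Dx _]; rewrite /tildeF /= lawF // cocycle.
- by move=> [x y] [/= Dx _]; apply: cvg_pair; [exact: cvgF | exact: cvgG].
Qed.

Lemma tildeF_semigroup_semicocycle :
  (forall t, 0 <= t -> holo_op D (Gam t)) ->
  is_semigroup (D `*` setT) (tildeF F Gam) -> semicocycle D F Gam.
Proof.
move=> holoG [_ [lawT cvgT]]; split; [exact: holoG | split].
- move=> t s t0 s0 x Dx y.
  by have [_ ->] := lawT t s t0 s0 (x, y) (conj Dx I).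
- move=> x Dx y.
  exact: cvg_comp _ _ (cvgT (x, y) (conj Dx I)) (@cvg_snd X Y (nbhs x) (nbhs y) _).
Qed.

End ExtendedSemigroup.

Theorem proposition3p3 (R : realType) (X Y : completeNormedModType R[i])
    (D : set X) (F : R -> X -> X) (Gam : R -> X -> Y -> Y) :
  domain D -> is_semigroup D F ->
  (forall t, 0 <= t -> holo_op D (Gam t)) ->
  (semicocycle D F Gam <-> is_semigroup (D `*` setT) (tildeF F Gam)) /\
  (forall (h hinv A : X -> X) (M Minv : X -> Y -> Y) (B0 : Y -> Y),
     biholo D h hinv -> bounded_op A ->
     holo_op D M ->
     (forall x, D x -> bounded_op (Minv x) /\
        (forall y, Minv x (M x y) = y /\ M x (Minv x y) = y)) ->
     bounded_op B0 ->
     (forall t x, 0 <= t -> D x -> F t x = hinv (expop A t (h x))) ->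
     (forall t x y, 0 <= t -> D x ->
        Gam t x y = Minv (F t x) (expop B0 t (M x y))) ->
     forall t x y, 0 <= t -> D x ->
       tildeF F Gam t (x, y) = tilde_hinv hinv Minv (expop A t (h x), expop B0 t (M x y))).
Proof.
(* Every argument is pointwise in D, so D need not be open or connected; the
   linearization only uses the closed forms of F and Gam. *)
move=> _ semiF holoG; split.
  split; [exact: semicocycle_tildeF_semigroup | exact: tildeF_semigroup_semicocycle].
move=> h hinv A M Minv B0 _ _ _ _ _ defF defGam t x y t0 Dx.
by rewrite /tildeF /tilde_hinv /= defGam // defF.
Qed.
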